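(* For any finite simple graphs $G$ and $H$, the strong product graph $G\boxtimes H$ is homotopic to the Cartesian simplex product graph $G\times H$.
   Context: For graphs $G=(V,E)$, $H=(W,F)$ the strong product $G\boxtimes H$ has vertex set $V\times W$, and distinct $(a,b),(c,d)$ are adjacent iff ($a=c$ and $\{b,d\}\in F$) or ($b=d$ and $\{a,c\}\in E$) or ($\{a,c\}\in E$ and $\{b,d\}\in F$). A simplex of a graph is the vertex set of a nonempty complete subgraph. The Cartesian simplex product $G\times H$ is the graph whose vertices are the pairs $(x,y)$ with $x$ a simplex of $G$ and $y$ a simplex of $H$, two distinct vertices $(x,y),(u,v)$ being adjacent iff ($x\subseteq u$ and $y\subseteq v$) or ($u\subseteq x$ and $v\subseteq y$). Homotopy of graphs is combinatorial (Ivashchenko/Evako style): the unit sphere $S(x)$ of a vertex $x$ is the subgraph induced by its neighbours; $K_1$ is contractible, and inductively a graph is contractible if it has a vertex $x$ such that $S(x)$ and $G\setminus x$ are contractible. A homotopy step is either removing a vertex whose unit sphere is contractible (together with its edges), or the inverse operation of adding a new vertex joined exactly to the vertices of a contractible induced subgraph. Two graphs are homotopic if they are related by a finite sequence of homotopy steps (and graph isomorphisms). *)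

From mathcomp Require Import all_boot.
From Stdlib Require Import Relations.Relation_Operators.
Set Implicit Arguments. Unset Strict Implicit. Unset Printing Implicit Defensive.

Record graph := Graph {
  vert : finType;
  adj : rel vert;
  adj_sym : symmetric adj;
  adj_irr : irreflexive adj }.

Section Induced.
Variables (G : graph) (A : {set vert G}).
Definition ind_vert : finType := {x : vert G | x \in A}.
Definition ind_adj : rel ind_vert := fun x y => adj (val x) (val y).
Lemma ind_adj_sym : symmetric ind_adj.
Proof. by move=> x y; rewrite /ind_adj adj_sym. Qed.
Lemma ind_adj_irr : irreflexive ind_adj.
Proof. by move=> x; rewrite /ind_adj adj_irr. Qed.
Definition induced : graph := Graph ind_adj_sym ind_adj_irr.
End Induced.

Definition nbhd (G : graph) (x : vert G) : {set vert G} := [set y | adj x y].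
Definition unit_sphere (G : graph) (x : vert G) : graph := induced (nbhd x).
Definition del_vertex (G : graph) (x : vert G) : graph := induced [set~ x].

(* Contractibility (Ivashchenko/Evako): K1 is contractible; G is contractible
   if some vertex x has S(x) and G \ x contractible. *)
Inductive contractible : graph -> Prop :=
| contr_K1 (G : graph) : #|vert G| = 1 -> contractible G
| contr_step (G : graph) (x : vert G) :
    contractible (unit_sphere x) -> contractible (del_vertex x) -> contractible G.

Section AddVertex.
Variables (G : graph) (A : {set vert G}).
Definition addv_adj : rel (option (vert G)) := fun a b =>
  match a, b with
  | Some a, Some b => adj a b
  | None, Some b => b \in A
  | Some a, None => a \in A
  | None, None => false
  end.
Lemma addv_adj_sym : symmetric addv_adj.
Proof. by case=> [a|] [b|] //=; rewrite adj_sym. Qed.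
Lemma addv_adj_irr : irreflexive addv_adj.
Proof. by case=> [a|] //=; rewrite adj_irr. Qed.
Definition add_vertex : graph := Graph addv_adj_sym addv_adj_irr.
End AddVertex.

Definition graph_iso (G H : graph) : Prop :=
  exists f : vert G -> vert H, bijective f /\ forall a b, adj (f a) (f b) = adj a b.

Inductive homotopy_step : graph -> graph -> Prop :=
| hs_remove (G : graph) (x : vert G) :
    contractible (unit_sphere x) -> homotopy_step G (del_vertex x)
| hs_add (G : graph) (A : {set vert G}) :
    contractible (induced A) -> homotopy_step G (add_vertex A)
| hs_iso (G H : graph) : graph_iso G H -> homotopy_step G H.

Definition homotopic (G H : graph) : Prop :=
  clos_refl_sym_trans graph homotopy_step G H.

Section Strong.
Variables (G H : graph).
Definition strong_adj : rel (vert G * vert H) := fun p q =>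
  (p != q) &&
  [|| (p.1 == q.1) && adj p.2 q.2,
      (p.2 == q.2) && adj p.1 q.1
    | adj p.1 q.1 && adj p.2 q.2].
Lemma strong_adj_sym : symmetric strong_adj.
Proof.
move=> p q; rewrite /strong_adj eq_sym [p.1 == _]eq_sym [p.2 == _]eq_sym.
by rewrite (adj_sym p.1) (adj_sym p.2).
Qed.
Lemma strong_adj_irr : irreflexive strong_adj.
Proof. by move=> p; rewrite /strong_adj eqxx. Qed.
Definition strong_prod : graph := Graph strong_adj_sym strong_adj_irr.
End Strong.

Definition simplex (G : graph) (A : {set vert G}) : bool :=
  (A != set0) && [forall x in A, forall y in A, (x != y) ==> adj x y].

Section SimplexProd.
Variables (G H : graph).
Definition sp_vert : finType :=
  {p : {set vert G} * {set vert H} | simplex p.1 && simplex p.2}.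
Definition sp_adj : rel sp_vert := fun p q =>
  (p != q) &&
  (((val p).1 \subset (val q).1) && ((val p).2 \subset (val q).2)
   || ((val q).1 \subset (val p).1) && ((val q).2 \subset (val p).2)).
Lemma sp_adj_sym : symmetric sp_adj.
Proof. by move=> p q; rewrite /sp_adj eq_sym orbC. Qed.
Lemma sp_adj_irr : irreflexive sp_adj.
Proof. by move=> p; rewrite /sp_adj eqxx. Qed.
Definition simplex_prod : graph := Graph sp_adj_sym sp_adj_irr.
End SimplexProd.

From mathcomp Require Import all_boot.
From mathcomp Require Import zify.
From Stdlib Require Import Relations.Relation_Operators.
Set Implicit Arguments. Unset Strict Implicit. Unset Printing Implicit Defensive.

(* Both products are induced subgraphs of the point-cell graph K on the
   vertices of G ⊠ H (points) and of G × H (cells), where a point (a, b) is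
   joined to a cell (x, y) when a ∈ x and b ∈ y.  Let W be either the points
   or the cells.  For every simplex S disjoint from W, the common neighbours of
   S in W form a cone: for a simplex of points, with apex the cell spanned by
   the two projections of S; for a simplex of cells, which is a chain, with
   apex any point of its smallest cell.  The vertices outside W can therefore
   be removed from K one at a time: the unit sphere of such a vertex q, in the
   subgraph induced by W and the vertices Q not yet removed, consists of the
   common neighbours of q in W and the neighbours of q in Q, and it collapses
   the same way onto a cone.  Hence K is homotopic to G ⊠ H and to G × H. *)

Definition embedding (G K : graph) (f : vert G -> vert K) :=
  injective f /\ forall a b, adj (f a) (f b) = adj a b.

(* G is isomorphic to the subgraph of K induced on A; working with such
   embeddings avoids induced subgraphs of induced subgraphs. *)
Definition embeds_onto (G K : graph) (A : {set vert K}) :=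
  exists2 f : vert G -> vert K, embedding f & f @: setT = A.

Definition has_apex (K : graph) (A : {set vert K}) :=
  exists2 w, w \in A & {in A, forall u, u != w -> adj w u}.

Section Embeddings.
Variables G K : graph.

Lemma card_embeds_onto (A : {set vert K}) : embeds_onto G A -> #|vert G| = #|A|.
Proof. by case=> f [f_inj _] <-; rewrite card_imset // cardsT. Qed.

Lemma embeds_onto_iso (T : graph) (A : {set vert K}) :
  embeds_onto G A -> embeds_onto T A -> graph_iso G T.
Proof.
case=> f [f_inj f_adj] fA [g [g_inj g_adj] gA].
have fg a : exists t, g t == f a.
  have /imsetP[t _ ->] : f a \in g @: setT by rewrite gA -fA imset_f.
  by exists t.
have gf t : exists a, f a == g t.
  have /imsetP[a _ ->] : g t \in f @: setT by rewrite fA -gA imset_f.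
  by exists a.
pose h a := xchoose (fg a); pose k t := xchoose (gf t).
have hK a : g (h a) = f a by apply/eqP/(xchooseP (fg a)).
have kK t : f (k t) = g t by apply/eqP/(xchooseP (gf t)).
exists h; split; last by move=> a b; rewrite -g_adj !hK f_adj.
by exists k => [a|t]; [apply: f_inj | apply: g_inj]; rewrite ?kK ?hK.
Qed.

Lemma embeds_onto_induced (f : vert G -> vert K) (B : {set vert G}) :
  embedding f -> embeds_onto (induced B) (f @: B).
Proof.
case=> f_inj f_adj; exists (fun y : vert (induced B) => f (val y)).
  by split=> [y z /f_inj /val_inj | y z] //; rewrite f_adj.
apply/setP=> v; apply/imsetP/imsetP => [[y _ ->]|[x xB ->]].
  by exists (val y); first exact: valP.
by exists (exist _ x xB).
Qed.

Lemma embeds_onto_split (A : {set vert K}) v :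
  embeds_onto G A -> v \in A ->
  exists x : vert G, embeds_onto (unit_sphere x) (A :&: nbhd v)
                  /\ embeds_onto (del_vertex x) (A :\ v).
Proof.
case=> f [f_inj f_adj] <- /imsetP[x _ ->]; exists x; split.
  have -> : f @: setT :&: nbhd (f x) = f @: nbhd x.
    apply/setP=> u; rewrite inE; apply/andP/imsetP => [[/imsetP[y _ ->]]|[y]].
      by rewrite inE f_adj; exists y; rewrite ?inE.
    by rewrite inE => xy ->; rewrite imset_f // inE f_adj.
  exact: embeds_onto_induced.
have -> : f @: setT :\ f x = f @: [set~ x].
  apply/setP=> u; rewrite !inE; apply/andP/imsetP => [[ux /imsetP[y _ eq_u]]|[y]].
    by exists y; rewrite // !inE -(inj_eq f_inj) -eq_u.
  by rewrite !inE => yx ->; rewrite (inj_eq f_inj) yx imset_f.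
exact: embeds_onto_induced.
Qed.

End Embeddings.

Lemma embeds_onto_setT (K : graph) : embeds_onto K [set: vert K].
Proof. by exists id; [split | rewrite imset_id]. Qed.

Lemma card_setI_nbhd (K : graph) (A : {set vert K}) u :
  u \in A -> #|A :&: nbhd u| < #|A|.
Proof.
move=> uA; rewrite (cardsD1 u A) uA ltnS; apply/subset_leq_card/subsetP=> v.
rewrite !inE => /andP[vA uv]; rewrite vA andbT.
by apply: contraTneq uv => ->; rewrite adj_irr.
Qed.

Lemma setUD1r (T : finType) (A B : {set T}) x :
  x \notin A -> A :|: B :\ x = (A :|: B) :\ x.
Proof.
move=> xA; apply/setP=> v; rewrite !inE.
by case: eqVneq => // ->; rewrite (negbTE xA).
Qed.

Lemma apex_contractible (G K : graph) (A : {set vert K}) :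
  embeds_onto G A -> has_apex A -> contractible G.
Proof.
have [n] := ubnP #|A|; elim: n => // n IH in G A *; rewrite ltnS => leAn.
move=> GA [w wA w_apex].
have [Aw0|[u]] := set_0Vmem (A :\ w).
  by apply: contr_K1; rewrite (card_embeds_onto GA) (cardsD1 w) wA Aw0 cards0.
rewrite !inE => /andP[uw uA].
have [x [Gx_sphere Gx_del]] := embeds_onto_split GA uA.
apply: (contr_step (x := x)).
  apply: (IH _ _ _ Gx_sphere); first exact: leq_trans (card_setI_nbhd uA) leAn.
  exists w; first by rewrite !inE wA adj_sym w_apex.
  by move=> v /setIP[vA _]; apply: w_apex.
apply: (IH _ _ _ Gx_del); first by apply: leq_trans leAn; rewrite (cardsD1 u A) uA.
exists w; first by rewrite !inE eq_sym uw.
by move=> v /setD1P[_ vA]; apply: w_apex.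
Qed.

Lemma simplexP (K : graph) (A : {set vert K}) :
  reflect (A != set0 /\ {in A &, forall x y, x != y -> adj x y}) (simplex A).
Proof.
apply: (iffP andP) => -[A0 A_adj]; split=> //.
  move=> x y xA yA.
  by move/forall_inP: A_adj => /(_ x xA) /forall_inP /(_ y yA) /implyP.
by apply/forall_inP=> x xA; apply/forall_inP=> y yA; apply/implyP; apply: A_adj.
Qed.

Lemma simplex1 (K : graph) (x : vert K) : simplex [set x].
Proof.
apply/simplexP; split=> [|y z /set1P-> /set1P->]; last by rewrite eqxx.
by apply/set0Pn; exists x; rewrite inE.
Qed.

Lemma simplexU1 (K : graph) (S : {set vert K}) q :
  simplex S -> {in S, forall s, adj q s} -> simplex (q |: S).
Proof.
move=> /simplexP[_ S_adj] qS; apply/simplexP; split.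
  by apply/set0Pn; exists q; rewrite setU11.
move=> x y /setU1P[->|xS] /setU1P[->|yS]; rewrite ?eqxx // => xy.
- exact: qS.
- by rewrite adj_sym qS.
- exact: S_adj.
Qed.

Lemma simplex_has_apex (K : graph) (A : {set vert K}) : simplex A -> has_apex A.
Proof.
by move=> /simplexP[/set0Pn[w wA] A_adj]; exists w => // u uA; rewrite eq_sym; apply: A_adj.
Qed.

Lemma simplex_imset (G K : graph) (f : vert G -> vert K) (A : {set vert G}) :
  embedding f -> simplex (f @: A) = simplex A.
Proof.
case=> f_inj f_adj; apply/simplexP/simplexP; rewrite imset_eq0 => -[A0 A_adj].
  split=> // x y xA yA xy.
  by rewrite -f_adj A_adj ?imset_f // (inj_eq f_inj).
split=> // _ _ /imsetP[x xA ->] /imsetP[y yA ->].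
by rewrite (inj_eq f_inj) f_adj; apply: A_adj.
Qed.

Section ApexRemoval.
Variables (K : graph) (W : {set vert K}).

Definition common_nbhd (S : {set vert K}) : {set vert K} :=
  [set w in W | S \subset nbhd w].

Lemma common_nbhd0 : common_nbhd set0 = W.
Proof. by apply/setP=> w; rewrite inE sub0set andbT. Qed.

Lemma common_nbhdU1 q S : common_nbhd (q |: S) = common_nbhd S :&: nbhd q.
Proof.
apply/setP=> w; rewrite !inE subUset sub1set inE adj_sym.
by rewrite [adj q w && _]andbC andbA.
Qed.

Hypothesis apex_common_nbhd :
  forall S, simplex S -> S \subset ~: W -> has_apex (common_nbhd S).

(* The unit sphere of q \in Q is common_nbhd (q |: S) :|: Q :&: nbhd q,
   which is again of this form. *)
Lemma contractible_common_nbhdU (S Q : {set vert K}) (G : graph) :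
  simplex S -> S \subset ~: W -> Q \subset ~: W -> {in Q & S, forall q s, adj q s} ->
  embeds_onto G (common_nbhd S :|: Q) -> contractible G.
Proof.
have [n] := ubnP #|Q|; elim: n => // n IH in S Q G *; rewrite ltnS => leQn.
move=> simS SW QW QS GSQ.
have [Q0|[q qQ]] := set_0Vmem Q.
  apply: apex_contractible (apex_common_nbhd simS SW).
  by rewrite -[common_nbhd S]setU0 -Q0.
have qSQ : q \in common_nbhd S :|: Q by rewrite inE qQ orbT.
have [x [Gx_sphere Gx_del]] := embeds_onto_split GSQ qSQ.
have qW : q \notin W by rewrite -in_setC (subsetP QW).
apply: (contr_step (x := x)).
  apply: (IH (q |: S) (Q :&: nbhd q)).
  - exact: leq_trans (card_setI_nbhd qQ) leQn.
  - by apply: simplexU1 simS _ => s; apply: QS.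
  - by rewrite subUset sub1set inE qW.
  - exact: subset_trans (subsetIl _ _) QW.
  - move=> v s /setIP[vQ]; rewrite inE => qv /setU1P[->|sS]; first by rewrite adj_sym.
    exact: QS.
  - by rewrite common_nbhdU1 -setIUl.
apply: (IH S (Q :\ q)) => //.
- by apply: leq_trans leQn; rewrite (cardsD1 q Q) qQ.
- exact: subset_trans (subD1set Q q) QW.
- by move=> v s /setD1P[_ vQ]; apply: QS.
by rewrite setUD1r // inE (negbTE qW).
Qed.

Lemma embeds_onto_setU_homotopic (T G : graph) (Q : {set vert K}) :
  embeds_onto T W -> Q \subset ~: W -> embeds_onto G (W :|: Q) -> homotopic G T.
Proof.
move=> TW; have [n] := ubnP #|Q|; elim: n => // n IH in G Q *; rewrite ltnS => leQn.
move=> QW GWQ.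
have [Q0|[q qQ]] := set_0Vmem Q.
  by apply/rst_step/hs_iso/(embeds_onto_iso GWQ); rewrite Q0 setU0.
have qWQ : q \in W :|: Q by rewrite inE qQ orbT.
have [x [Gx_sphere Gx_del]] := embeds_onto_split GWQ qWQ.
have qW : q \notin W by rewrite -in_setC (subsetP QW).
apply: (@rst_trans _ _ _ (del_vertex x)).
  apply/rst_step/hs_remove.
  apply: (contractible_common_nbhdU (S := [set q]) (Q := Q :&: nbhd q)).
  - exact: simplex1.
  - by rewrite sub1set inE.
  - exact: subset_trans (subsetIl _ _) QW.
  - by move=> v s /setIP[_ qv] /set1P->; move: qv; rewrite inE adj_sym.
  - by rewrite -[[set q]]setU0 common_nbhdU1 common_nbhd0 -setIUl.
apply: (IH _ (Q :\ q)).
- by apply: leq_trans leQn; rewrite (cardsD1 q Q) qQ.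
- exact: subset_trans (subD1set Q q) QW.
by rewrite setUD1r.
Qed.

Lemma embeds_onto_homotopic (T : graph) : embeds_onto T W -> homotopic K T.
Proof.
move=> TW; apply: (embeds_onto_setU_homotopic TW (subxx (~: W))).
by rewrite setUCr; apply: embeds_onto_setT.
Qed.

End ApexRemoval.

Lemma imset_preimset (aT rT : finType) (f : aT -> rT) (S : {set rT}) :
  S \subset f @: setT -> f @: (f @^-1: S) = S.
Proof.
move=> /subsetP Sf; apply/setP=> v; apply/imsetP/idP => [[x + ->]|vS].
  by rewrite inE.
by have /imsetP[x _ eq_v] := Sf v vS; exists x; rewrite // inE -eq_v.
Qed.

Lemma subset_setX (T1 T2 : finType) (P : {set T1 * T2}) A B :
  (P \subset setX A B) = (fst @: P \subset A) && (snd @: P \subset B).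
Proof.
have -> : setX A B = fst @^-1: A :&: snd @^-1: B.
  by apply/setP=> -[a b]; rewrite !inE.
by rewrite subsetI !sub_imset_pre.
Qed.

Section StrongProduct.
Variables G H : graph.
Implicit Types (P : {set vert (strong_prod G H)}) (p q : vert G * vert H).

Lemma strong_adjE p q : strong_adj p q =
  [&& p != q, (p.1 == q.1) || adj p.1 q.1 & (p.2 == q.2) || adj p.2 q.2].
Proof.
case: p q => [a b] [c d]; rewrite /strong_adj /= xpair_eqE.
case: (eqVneq a c) => [<-|_]; case: (eqVneq b d) => [<-|_] //=.
all: by rewrite ?adj_irr ?andbF ?andbT ?orbF.
Qed.

Lemma simplex_setX (A : {set vert G}) (B : {set vert H}) :
  simplex A -> simplex B -> simplex (setX A B : {set vert (strong_prod G H)}).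
Proof.
move=> /simplexP[/set0Pn[a aA] A_adj] /simplexP[/set0Pn[b bB] B_adj].
apply/simplexP; split; first by apply/set0Pn; exists (a, b); rewrite in_setX aA.
move=> [x y] [x' y']; rewrite !in_setX => /andP[xA yB] /andP[x'A y'B] neq.
rewrite /= strong_adjE neq /=.
by apply/andP; split; case: eqVneq => //= ?; [apply: A_adj | apply: B_adj].
Qed.

Lemma simplex_fst P : simplex P -> simplex (fst @: P).
Proof.
move=> /simplexP[P0 P_adj]; apply/simplexP; rewrite imset_eq0; split=> //.
move=> _ _ /imsetP[p pP ->] /imsetP[q qP ->] pq.
have : strong_adj p q by apply: P_adj => //; apply: contraNneq pq => ->.
by rewrite strong_adjE (negbTE pq) => /and3P[].
Qed.

Lemma simplex_snd P : simplex P -> simplex (snd @: P).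
Proof.
move=> /simplexP[P0 P_adj]; apply/simplexP; rewrite imset_eq0; split=> //.
move=> _ _ /imsetP[p pP ->] /imsetP[q qP ->] pq.
have : strong_adj p q by apply: P_adj => //; apply: contraNneq pq => ->.
by rewrite strong_adjE (negbTE pq) => /and3P[].
Qed.

End StrongProduct.

Section Cells.
Variables G H : graph.
Implicit Types c d : sp_vert G H.

Definition sub_cell c d :=
  ((val c).1 \subset (val d).1) && ((val c).2 \subset (val d).2).

Definition cell_points c : {set vert G * vert H} := setX (val c).1 (val c).2.

Lemma sp_adjE c d : sp_adj c d = (c != d) && (sub_cell c d || sub_cell d c).
Proof. by []. Qed.

Lemma simplex_cell_points c : simplex (cell_points c : {set vert (strong_prod G H)}).
Proof. by case/andP: (valP c); apply: simplex_setX. Qed.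

Lemma sub_cell_points c d : sub_cell c d -> cell_points c \subset cell_points d.
Proof. by case/andP; apply: setXS. Qed.

Lemma simplex_cells_min (C : {set vert (simplex_prod G H)}) :
  simplex C -> exists2 c, c \in C & {in C, forall d, sub_cell c d}.
Proof.
move=> /simplexP[/set0Pn[c0 c0C] C_adj].
pose weight c := #|(val c).1| + #|(val c).2|.
have [c cC c_min] := arg_minnP weight c0C.
exists c => // d dC; have [<-|cd] := eqVneq c d; first by rewrite /sub_cell !subxx.
have /orP[//|/andP[dc1 dc2]] : sub_cell c d || sub_cell d c.
  by have := C_adj c d cC dC cd; rewrite /= sp_adjE cd.
have le_w := c_min d dC; rewrite /weight in le_w.
have le1 := subset_leq_card dc1; have le2 := subset_leq_card dc2.
have eq1 : (val d).1 = (val c).1 by apply/eqP; rewrite eqEcard dc1 andTb; lia.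
have eq2 : (val d).2 = (val c).2 by apply/eqP; rewrite eqEcard dc2 andTb; lia.
by rewrite /sub_cell eq1 eq2 !subxx.
Qed.

End Cells.

Section PointCellGraph.
Variables G H : graph.
Local Notation point := (vert (strong_prod G H)).
Local Notation cell := (vert (simplex_prod G H)).

Definition point_cell_adj : rel (point + cell) := fun u v =>
  match u, v with
  | inl p, inl q => adj p q
  | inr c, inr d => adj c d
  | inl p, inr c | inr c, inl p => p \in cell_points c
  end.

Lemma point_cell_adj_sym : symmetric point_cell_adj.
Proof. by case=> [p|c] [q|d] //; apply: adj_sym. Qed.

Lemma point_cell_adj_irr : irreflexive point_cell_adj.
Proof. by case=> [p|c]; apply: adj_irr. Qed.

Definition point_cell_graph : graph := Graph point_cell_adj_sym point_cell_adj_irr.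
Local Notation K := point_cell_graph.

Definition points : {set vert K} := [set v | if v is inl _ then true else false].
Definition cells : {set vert K} := ~: points.

Lemma embedding_inl : embedding (inl : point -> vert K).
Proof. by split; first exact: inl_inj. Qed.

Lemma embedding_inr : embedding (inr : cell -> vert K).
Proof. by split; first exact: inr_inj. Qed.

Lemma imset_inl : (inl : point -> vert K) @: setT = points.
Proof.
apply/setP=> -[p|c]; rewrite inE; first by rewrite imset_f.
by apply/imsetP=> -[].
Qed.

Lemma imset_inr : (inr : cell -> vert K) @: setT = cells.
Proof.
apply/setP=> -[p|c]; rewrite !inE; last by rewrite imset_f.
by apply/imsetP=> -[].
Qed.

Lemma embeds_onto_points : embeds_onto (strong_prod G H) points.
Proof. by exists inl; [exact: embedding_inl | exact: imset_inl]. Qed.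

Lemma embeds_onto_cells : embeds_onto (simplex_prod G H) cells.
Proof. by exists inr; [exact: embedding_inr | exact: imset_inr]. Qed.

Lemma preimset_inl_nbhd (c : cell) :
  (inl : point -> vert K) @^-1: nbhd (inr c : vert K) = cell_points c.
Proof. by apply/setP=> p; rewrite !inE /= !inE. Qed.

Lemma preimset_inr_nbhd (p : point) :
  (inr : cell -> vert K) @^-1: nbhd (inl p : vert K) = [set c | p \in cell_points c].
Proof. by apply/setP=> c; rewrite !inE /= !inE. Qed.

Lemma apex_cells S :
  simplex S -> S \subset ~: cells -> has_apex (common_nbhd cells S).
Proof.
rewrite setCK -imset_inl => simS /imset_preimset S_eq.
set P := _ @^-1: S in S_eq.
have simP : simplex (P : {set point}) by rewrite -(simplex_imset P embedding_inl) S_eq.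
have c0_simplex : simplex (fst @: P) && simplex (snd @: P).
  by rewrite simplex_fst ?simplex_snd.
pose c0 : cell := exist _ (fst @: P, snd @: P) c0_simplex.
have S_nbhd d : (S \subset nbhd (inr d : vert K)) = sub_cell c0 d.
  by rewrite -S_eq sub_imset_pre preimset_inl_nbhd subset_setX.
exists (inr c0); first by rewrite !inE S_nbhd /sub_cell !subxx.
move=> [p|d]; rewrite !inE //= S_nbhd => c0d; rewrite (inj_eq inr_inj) => dc0.
by rewrite sp_adjE eq_sym dc0 c0d.
Qed.

Lemma apex_points S :
  simplex S -> S \subset ~: points -> has_apex (common_nbhd points S).
Proof.
rewrite -[~: points]/cells -imset_inr => simS /imset_preimset S_eq.
set C := _ @^-1: S in S_eq.
have simC : simplex (C : {set cell}) by rewrite -(simplex_imset C embedding_inr) S_eq.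
have [c cC c_min] := simplex_cells_min simC.
have -> : common_nbhd points S = inl @: cell_points c.
  apply/setP=> -[p|d]; rewrite [_ \in common_nbhd _ _]inE /=; last first.
    by rewrite inE; apply/esym/imsetP=> -[].
  rewrite inE mem_imset; last exact: inl_inj.
  rewrite -S_eq sub_imset_pre preimset_inr_nbhd.
  apply/subsetP/idP=> [/(_ c cC)|pc d dC]; rewrite inE //.
  exact: subsetP (sub_cell_points (c_min d dC)) p pc.
apply: simplex_has_apex.
by rewrite (simplex_imset _ embedding_inl) simplex_cell_points.
Qed.

End PointCellGraph.

Theorem mainTheorem2 (G H : graph) :
  homotopic (strong_prod G H) (simplex_prod G H).
Proof.
apply: (@rst_trans _ _ _ (point_cell_graph G H)).
  exact/rst_sym/(embeds_onto_homotopic (@apex_points G H))/embeds_onto_points.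
exact/(embeds_onto_homotopic (@apex_cells G H))/embeds_onto_cells.
Qed.
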